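(* For positive integers $n$ and $i$ with $n\ge(2i)^{100}$, $$F(n,i)\le\frac{i^{2n+i}}{n^{(i-1)/2}}.$$
   Context: For positive integers $m,i$, $F(m,i):=\sum_{v_1,\dots,v_i\in\mathbb Z_{\ge0},\ v_1+\cdots+v_i=m}\binom{m}{v_1,\dots,v_i}^2$, where $\binom{m}{v_1,\dots,v_i}=\frac{m!}{v_1!\cdots v_i!}$ is the multinomial coefficient. *)

From mathcomp Require Import all_boot.

(* Multinomial coefficient m! / (v_1! ... v_i!) for v : 'I_i -> nat with sum m.
   (The division is exact when \sum_j v j = m.) *)
Definition multinom {m i : nat} (v : {ffun 'I_i -> 'I_m.+1}) : nat :=
  m`! %/ \prod_(j < i) (v j)`!.

(* F(m,i) = sum over (v_1,...,v_i) in Z_{>=0}^i with v_1+...+v_i = m of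
   the squared multinomial coefficient. Each v_j <= m, so ranging over
   'I_m.+1 loses nothing. *)
Definition F (m i : nat) : nat :=
  \sum_(v : {ffun 'I_i -> 'I_m.+1} | \sum_(j < i) (v j : nat) == m)
     (multinom (m:=m) (i:=i) v) ^ 2.

From Stdlib Require Import Reals Lra Lia Factorial.
From Coquelicot Require Coquelicot.
From mathcomp Require all_boot all_order all_algebra zify ring.

(* Write n = q i + r with r < i. Bounding one factor of each squared multinomial
   coefficient by the largest one gives F(n,i) <= (n! / (q!^i (q+1)^r)) * i^n: the
   multinomial coefficients sum to i^n, and the product of the factorials of the
   parts is smallest for the balanced composition (r parts q+1, the others q).
   The Stirling-type bounds e n^(2n+1) <= n!^2 e^(2n) <= e^2 n^(2n+1), obtained by
   squeezing (1 + 1/n)^(2n+1) between e^2 and e^(2 + 1/(n(n+1))), then give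
   F(n,i)^2 n^(i-1) <= e^(2-i) 2^i i^(4n+i) <= i^(4n+2i).  The hypothesis
   n >= (2i)^100 is only used through n >= i. *)

Module Multinomial.
Import all_boot all_order all_algebra zify ring.
Import Order.TTheory GRing.Theory Num.Theory.
#[local] Set Implicit Arguments.
#[local] Unset Strict Implicit.

Section Compositions.
Variables N i : nat.
Implicit Types (v : {ffun 'I_i -> 'I_N.+1}) (j : 'I_i).

Definition set_coord v j (x : nat) : {ffun 'I_i -> 'I_N.+1} :=
  [ffun k => if k == j then inord x else v k].

Lemma set_coord_eq v j x : x <= N -> (set_coord v j x j : nat) = x.
Proof. by move=> hx; rewrite ffunE eqxx inordK. Qed.

Lemma set_coord_neq v j x k : k != j -> set_coord v j x k = v k.
Proof. by move=> hk; rewrite ffunE (negbTE hk). Qed.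

Lemma set_coord_id v j : set_coord v j (v j) = v.
Proof.
apply/ffunP => k; rewrite ffunE; case: eqP => [->|//].
by apply: val_inj; rewrite /= inordK.
Qed.

Lemma set_coord_set_coord v j x y : set_coord (set_coord v j x) j y = set_coord v j y.
Proof. by apply/ffunP => k; rewrite !ffunE; case: eqP. Qed.

Lemma sum_set_coord v j x : x <= N ->
  \sum_k (set_coord v j x k : nat) + v j = \sum_k (v k : nat) + x.
Proof.
move=> hx; rewrite (bigD1 j) //= [in RHS](bigD1 j) //= set_coord_eq //.
rewrite (eq_bigr (fun k => (v k : nat))) => [|k hk]; last by rewrite set_coord_neq.
set S := \sum_(k | k != j) (v k : nat); lia.
Qed.

Lemma prod_fact_set_coord v j x : x <= N ->
  \prod_k (set_coord v j x k)`! * (v j)`! = \prod_k (v k)`! * x`!.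
Proof.
move=> hx; rewrite (bigD1 j) //= [in RHS](bigD1 j) //= set_coord_eq //.
rewrite (eq_bigr (fun k => (v k)`!)) => [|k hk]; last by rewrite set_coord_neq.
set P := \prod_(k | k != j) (v k)`!; lia.
Qed.

Lemma leq_coord_sum v j : v j <= \sum_k (v k : nat).
Proof. by rewrite (bigD1 j) //= leq_addr. Qed.

Lemma pred_coord_le v j : (v j).-1 <= N.
Proof. exact: leq_ltn_trans (leq_pred _) (ltn_ord (v j)). Qed.

Lemma prod_fact_gt0 v : 0 < \prod_k (v k)`!.
Proof. by apply: prodn_gt0 => k; apply: fact_gt0. Qed.

End Compositions.

(* The t-th of m units placed round-robin into i parts raises a part from t %/ i
   to (t %/ i).+1, so this is the product of the factorials of the balanced
   composition of m. *)
Definition balanced_prod (i m : nat) : nat := \prod_(t < m) (t %/ i).+1.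

Lemma balanced_prodS i m : balanced_prod i m.+1 = balanced_prod i m * (m %/ i).+1.
Proof. by rewrite /balanced_prod big_ord_recr. Qed.

Lemma balanced_prod_gt0 i m : 0 < balanced_prod i m.
Proof. exact: prodn_gt0. Qed.

Lemma balanced_prodE i q r : 0 < i -> r <= i ->
  balanced_prod i (q * i + r) = q`! ^ i * q.+1 ^ r.
Proof.
move=> i_gt0; elim: q r => [|q IHq] r.
  rewrite mul0n add0n fact0 !exp1n mul1n.
  elim: r => [|r IHr] r_le; first by rewrite /balanced_prod big_ord0.
  by rewrite balanced_prodS IHr 1?ltnW // divn_small.
elim: r => [|r IHr] r_le.
  by rewrite addn0 mulSn addnC IHq // factS expnMn expn0 muln1 mulnC.
rewrite addnS balanced_prodS IHr 1?ltnW // divnMDl // divn_small //.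
by rewrite addn0 expnS [q.+2 * _]mulnC mulnA.
Qed.

Lemma balanced_prod_le_prod_fact N i m (v : {ffun 'I_i.+1 -> 'I_N.+1}) :
  \sum_k (v k : nat) = m -> balanced_prod i.+1 m <= \prod_k (v k)`!.
Proof.
(* Remove one unit from a largest part. *)
elim: m v => [|m IH] v sum_v; first by rewrite /balanced_prod big_ord0 prod_fact_gt0.
have [a _ a_max] := @arg_maxnP _ ord0 xpredT (fun k => (v k : nat)) isT.
have sum_le : m.+1 <= i.+1 * v a.
  have -> : i.+1 * v a = \sum_(k < i.+1) (v a : nat) by rewrite sum_nat_const card_ord.
  by rewrite -sum_v; apply: leq_sum => k _; apply: a_max.
have va_gt0 : 0 < v a by case: (v a : nat) sum_le => //; rewrite muln0.
set x := (v a).-1; have va_x : v a = x.+1 :> nat by rewrite prednK.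
have x_le : x <= N := pred_coord_le v a.
have sum_u : \sum_k (set_coord v a x k : nat) = m.
  by have := sum_set_coord v a x_le; rewrite sum_v va_x; lia.
have prod_v : \prod_k (v k)`! = \prod_k (set_coord v a x k)`! * v a.
  have := prod_fact_set_coord v a x_le; rewrite va_x factS mulnA => h.
  by apply/eqP; rewrite -(eqn_pmul2r (fact_gt0 x)) -h.
rewrite balanced_prodS prod_v leq_mul ?IH //.
by rewrite ltn_divLR // mulnC.
Qed.

Section InvFactSum.
Variables N i : nat.
Local Open Scope ring_scope.
Local Notation comp := {ffun 'I_i -> 'I_N.+1}.
Implicit Types (u v : comp) (j : 'I_i).

Definition inv_fact_sum (m : nat) : rat :=
  \sum_(v : comp | (\sum_k (v k : nat) == m)%N) ((\prod_k (v k)`!)%:R)^-1.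

Lemma inv_fact_sum0 : inv_fact_sum 0 = 1.
Proof.
rewrite /inv_fact_sum (big_pred1 [ffun => ord0]).
  by rewrite big1 ?invr1 // => k _; rewrite ffunE fact0.
move=> v /=; apply/idP/eqP => [/eqP sum_v|->].
  apply/ffunP => k; rewrite ffunE; apply: val_inj => /=.
  by have := leq_coord_sum v k; rewrite sum_v leqn0 => /eqP.
by rewrite big1 // => k _; rewrite ffunE.
Qed.

Lemma sum_coord_mul_inv_fact (m : nat) j : (m < N)%N ->
  \sum_(v : comp | (\sum_k (v k : nat) == m.+1)%N) (v j)%:R * ((\prod_k (v k)`!)%:R)^-1
  = inv_fact_sum m.
Proof.
(* Decrementing the j-th part is a bijection from the compositions of m.+1 with
   v j > 0 onto the compositions of m, and (v j)%:R / (\prod_k (v k)`!)%:R equals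
   1 / (\prod_k (dec v k)`!)%:R. *)
move=> m_lt.
pose dec v := set_coord v j (v j).-1; pose inc u := set_coord u j (u j).+1.
rewrite (bigID (fun v : comp => (0 < v j)%N)) /= [X in _ + X]big1 ?addr0; last first.
  by move=> v /andP [_]; rewrite -eqn0Ngt => /eqP ->; rewrite mul0r.
rewrite (eq_bigr (fun v : comp => ((\prod_k (dec v k)`!)%:R)^-1)); last first.
  move=> v /andP [_ vj_gt0].
  have := prod_fact_set_coord v j (pred_coord_le v j); rewrite -/(dec v).
  rewrite -[in (v j)`!](prednK vj_gt0) factS prednK // mulnA => prod_v.
  have -> : (\prod_k (v k)`! = \prod_k (dec v k)`! * v j)%N.
    by apply/eqP; rewrite -(eqn_pmul2r (fact_gt0 (v j).-1)) prod_v.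
  rewrite natrM invfM mulrCA mulfV ?mulr1 //.
  by rewrite pnatr_eq0 -lt0n.
rewrite (reindex_onto inc dec) => [|v /andP [_ vj_gt0]]; last first.
  by rewrite /inc /dec set_coord_set_coord set_coord_eq ?pred_coord_le // prednK // set_coord_id.
apply: eq_big => u; last by move=> /andP [_ /eqP ->].
have [uj_lt | uj_ge] := ltnP (u j) N.
  rewrite /dec /inc set_coord_set_coord set_coord_eq //= set_coord_id eqxx !andbT.
  by rewrite -(eqn_add2r (u j)) sum_set_coord // addnS addSn eqSS eqn_add2r.
have -> : ((\sum_k (u k : nat)) == m)%N = false.
  by apply/negbTE; rewrite neq_ltn (leq_trans m_lt (leq_trans uj_ge (leq_coord_sum u j))) orbT.
have -> : (inc u j : nat) = 0%N.
  by rewrite /inc /set_coord ffunE eqxx /inord val_insubd ltnS ltnNge uj_ge.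
by rewrite andbF andFb.
Qed.

Lemma inv_fact_sumS (m : nat) : (m < N)%N -> m.+1%:R * inv_fact_sum m.+1 = i%:R * inv_fact_sum m.
Proof.
move=> m_lt; rewrite {1}/inv_fact_sum mulr_sumr.
rewrite (eq_bigr (fun v : comp => \sum_j (v j)%:R * ((\prod_k (v k)`!)%:R)^-1)); last first.
  by move=> v /eqP sum_v; rewrite -mulr_suml -natr_sum sum_v.
rewrite exchange_big /= (eq_bigr (fun _ => inv_fact_sum m)) => [|j _]; last exact: sum_coord_mul_inv_fact.
by rewrite sumr_const card_ord mulr_natl.
Qed.

Lemma inv_fact_sumE (m : nat) : (m <= N)%N -> inv_fact_sum m = (i ^ m)%:R / (m`!)%:R.
Proof.
elim: m => [|m IH] m_le; first by rewrite inv_fact_sum0 fact0 expn0 divr1.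
have Sm_neq0 : m.+1%:R != 0 :> rat by rewrite pnatr_eq0.
have fact_neq0 : (m`!)%:R != 0 :> rat by rewrite pnatr_eq0 -lt0n fact_gt0.
apply: (mulfI Sm_neq0); rewrite inv_fact_sumS // IH 1?ltnW //.
rewrite factS expnS !natrM; field.
by rewrite fact_neq0 addrC natr1.
Qed.

End InvFactSum.

Lemma sum_multinom_le n i :
  \sum_(v : {ffun 'I_i -> 'I_n.+1} | \sum_(j < i) (v j : nat) == n) multinom v <= i ^ n.
Proof.
rewrite -(ler_nat rat) natr_sum.
apply: (@le_trans _ _ ((n`!)%:R * inv_fact_sum n i n)%R).
  rewrite /inv_fact_sum mulr_sumr; apply: ler_sum => v _.
  have prod_gt0 : (0 < (\prod_k (v k)`!)%:R :> rat)%R by rewrite ltr0n prod_fact_gt0.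
  by rewrite ler_pdivlMr // -natrM ler_nat leq_divM.
by rewrite inv_fact_sumE // mulrC -mulrA mulVf ?mulr1 // pnatr_eq0 -lt0n fact_gt0.
Qed.

Lemma F_le_balanced n i :
  F n i.+1 <= n`! %/ balanced_prod i.+1 n * i.+1 ^ n.
Proof.
rewrite /F (@leq_trans (\sum_(v : {ffun 'I_i.+1 -> 'I_n.+1} | \sum_j (v j : nat) == n)
          multinom v * (n`! %/ balanced_prod i.+1 n))) //.
  apply: leq_sum => v /eqP sum_v; rewrite expnS expn1 leq_mul2l; apply/orP; right.
  by rewrite leq_div2l ?balanced_prod_gt0 ?balanced_prod_le_prod_fact.
by rewrite -big_distrl /= mulnC leq_mul2l sum_multinom_le orbT.
Qed.

Lemma factorial_fact n : n`! = Factorial.fact n.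
Proof. by elim: n => [//|n IH]; rewrite factS IH. Qed.

Lemma expn_pow m n : m ^ n = Nat.pow m n.
Proof. by elim: n => [//|n IH]; rewrite expnS IH. Qed.

Lemma F_le_balanced_decomp n i : exists D q r,
  [/\ (F n i.+1 <= D * Nat.pow i.+1 n)%coq_nat,
      (D * (Nat.pow (Factorial.fact q) i.+1 * Nat.pow q.+1 r) <= Factorial.fact n)%coq_nat,
      n = (q * i.+1 + r)%coq_nat & (r < i.+1)%coq_nat].
Proof.
exists (n`! %/ balanced_prod i.+1 n), (n %/ i.+1), (n %% i.+1).
rewrite -!expn_pow -!factorial_fact -(balanced_prodE _ _ (ltnW (ltn_pmod n _))) // -divn_eq.
split; [apply/ssrnat.leP; exact: F_le_balanced | apply/ssrnat.leP; exact: leq_divM | exact: divn_eq |].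
by apply/ssrnat.ltP; rewrite ltn_pmod.
Qed.

End Multinomial.

Open Scope R_scope.

Section LogBounds.
Import Coquelicot.Coquelicot.

Lemma ln_1p_ge x : 0 < x -> 2 * x / (2 + x) <= ln (1 + x).
Proof.
intros Hx.
destruct (MVT_cor2 (fun t => ln (1 + t) - 2 * t / (2 + t))
  (fun t => t ^ 2 / ((1 + t) * (2 + t) ^ 2)) 0 x Hx) as [c [Hc Hc0]].
- intros c Hc. apply is_derive_Reals. auto_derive; [lra | field; lra].
- assert (0 <= c ^ 2 / ((1 + c) * (2 + c) ^ 2) * (x - 0)).
  { apply Rmult_le_pos; [|lra]. apply Rle_mult_inv_pos; [nra|].
    apply Rmult_lt_0_compat; [lra | apply pow_lt; lra]. }
  rewrite Rplus_0_r, ln_1, Rmult_0_r, Rdiv_0_l in Hc. lra.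
Qed.

Lemma ln_1p_le x : 0 < x -> ln (1 + x) <= x - x ^ 2 / 2 + x ^ 3 / 3.
Proof.
intros Hx.
destruct (MVT_cor2 (fun t => t - t ^ 2 / 2 + t ^ 3 / 3 - ln (1 + t))
  (fun t => t ^ 3 / (1 + t)) 0 x Hx) as [c [Hc Hc0]].
- intros c Hc. apply is_derive_Reals. auto_derive; [lra | field; lra].
- assert (0 <= c ^ 3 / (1 + c) * (x - 0)).
  { apply Rmult_le_pos; [|lra]. apply Rle_mult_inv_pos; [apply pow_le|]; lra. }
  rewrite Rplus_0_r, ln_1 in Hc. lra.
Qed.

End LogBounds.

Lemma exp_pow x k : exp x ^ k = exp (INR k * x).
Proof.
induction k as [|k IH]; [simpl; rewrite Rmult_0_l, exp_0; reflexivity|].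
rewrite <- tech_pow_Rmult, IH, S_INR, <- exp_plus. f_equal. ring.
Qed.

Lemma pow_exp_ln x k : 0 < x -> x ^ k = exp (INR k * ln x).
Proof. intros Hx. rewrite <- exp_pow, exp_ln; [reflexivity | exact Hx]. Qed.

Lemma exp_le x y : x <= y -> exp x <= exp y.
Proof. intros [H|H]; [left; apply exp_increasing; exact H | subst; lra]. Qed.

Lemma exp2_le_pow_1p_inv n : (1 <= n)%nat -> exp 2 <= (1 + 1 / INR n) ^ (2 * n + 1).
Proof.
intros Hn. assert (HN : 1 <= INR n) by (apply (le_INR 1); lia).
assert (Hx : 0 < 1 / INR n) by (apply Rdiv_lt_0_compat; lra).
rewrite pow_exp_ln by lra. apply exp_le.
pose proof (ln_1p_ge _ Hx) as H.
rewrite plus_INR, mult_INR. simpl INR at 1 3.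
apply Rle_trans with ((2 * INR n + 1) * (2 * (1 / INR n) / (2 + 1 / INR n))).
- right. field. lra.
- apply Rmult_le_compat_l; lra.
Qed.

Lemma pow_1p_inv_le_exp n : (1 <= n)%nat ->
  (1 + 1 / INR n) ^ (2 * n + 1) <= exp (2 + 1 / (INR n * (INR n + 1))).
Proof.
intros Hn. assert (HN : 1 <= INR n) by (apply (le_INR 1); lia).
assert (Hx : 0 < 1 / INR n) by (apply Rdiv_lt_0_compat; lra).
rewrite pow_exp_ln by lra. apply exp_le.
pose proof (ln_1p_le _ Hx) as H.
rewrite plus_INR, mult_INR. simpl INR at 1 3.
set (m := INR n) in *.
apply Rle_trans with ((2 * m + 1) * (1 / m - (1 / m) ^ 2 / 2 + (1 / m) ^ 3 / 3)).
- apply Rmult_le_compat_l; lra.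
- assert (E : 2 + 1 / (m * (m + 1)) - (2 * m + 1) * (1 / m - (1 / m) ^ 2 / 2 + (1 / m) ^ 3 / 3)
            = (5 * m ^ 2 - 3 * m - 2) / (6 * m ^ 3 * (m + 1))) by (field; lra).
  assert (0 <= (5 * m ^ 2 - 3 * m - 2) / (6 * m ^ 3 * (m + 1))).
  { apply Rle_mult_inv_pos; [nra|]. assert (0 < m ^ 3) by (apply pow_lt; lra). nra. }
  lra.
Qed.

(* The square of n! / (sqrt n (n/e)^n), which decreases to 2 pi. *)
Definition stirling_ratio (n : nat) : R :=
  INR (fact n) ^ 2 * exp (2 * INR n) / INR n ^ (2 * n + 1).

Lemma stirling_ratio_1 : stirling_ratio 1 = exp 2.
Proof.
unfold stirling_ratio. simpl. rewrite !Rmult_1_l, !Rmult_1_r. unfold Rdiv. rewrite Rinv_1. ring.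
Qed.

Lemma stirling_ratio_S n : (1 <= n)%nat ->
  stirling_ratio (S n) * (1 + 1 / INR n) ^ (2 * n + 1) = stirling_ratio n * exp 2.
Proof.
intros Hn. assert (HN : 1 <= INR n) by (apply (le_INR 1); lia).
assert (Epow : (1 + 1 / INR n) ^ (2 * n + 1) = (INR n + 1) ^ (2 * n + 1) / INR n ^ (2 * n + 1)).
{ replace (1 + 1 / INR n) with ((INR n + 1) * / INR n) by (field; lra).
  rewrite Rpow_mult_distr, pow_inv. reflexivity. }
unfold stirling_ratio. rewrite Epow.
replace (2 * S n + 1)%nat with (2 + (2 * n + 1))%nat by lia.
rewrite fact_simpl, mult_INR, S_INR, pow_add.
replace (2 * (INR n + 1)) with (2 * INR n + 2) by ring.
rewrite exp_plus.
assert (0 < INR n ^ (2 * n + 1)) by (apply pow_lt; lra).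
assert (0 < (INR n + 1) ^ (2 * n + 1)) by (apply pow_lt; lra).
field. lra.
Qed.

Lemma stirling_ratio_le n : (1 <= n)%nat -> stirling_ratio n <= exp 2.
Proof.
intros Hn. induction n as [|n IH]; [lia|].
destruct (Nat.eq_dec n 0) as [->|Hn0]; [rewrite stirling_ratio_1; lra|].
assert (H1 : (1 <= n)%nat) by lia.
pose proof (stirling_ratio_S n H1) as E. pose proof (exp2_le_pow_1p_inv n H1) as X.
pose proof (IH H1). pose proof (exp_pos 2).
assert (0 <= stirling_ratio (S n)).
{ unfold stirling_ratio, Rdiv. apply Rle_mult_inv_pos.
  - apply Rmult_le_pos; [apply pow2_ge_0 | left; apply exp_pos].
  - apply pow_lt, lt_0_INR; lia. }
nra.
Qed.

(* The factor exp (1 / n) makes the lower bound inductive. *)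
Lemma stirling_ratio_ge n : (1 <= n)%nat -> exp (1 + 1 / INR n) <= stirling_ratio n.
Proof.
intros Hn. induction n as [|n IH]; [lia|].
destruct (Nat.eq_dec n 0) as [->|Hn0].
{ rewrite stirling_ratio_1. simpl. right. f_equal. field. }
assert (H1 : (1 <= n)%nat) by lia.
assert (HN : 1 <= INR n) by (apply (le_INR 1); lia).
pose proof (stirling_ratio_S n H1) as E. pose proof (pow_1p_inv_le_exp n H1) as X.
pose proof (IH H1).
assert (Ee : exp (1 + 1 / INR (S n)) * exp (2 + 1 / (INR n * (INR n + 1)))
             = exp (1 + 1 / INR n) * exp 2).
{ rewrite S_INR, <- !exp_plus. f_equal. field. lra. }
assert (0 < (1 + 1 / INR n) ^ (2 * n + 1)).
{ apply pow_lt. assert (0 < 1 / INR n) by (apply Rdiv_lt_0_compat; lra). lra. }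
pose proof (exp_pos 2). pose proof (exp_pos (1 + 1 / INR (S n))).
apply Rmult_le_reg_r with ((1 + 1 / INR n) ^ (2 * n + 1)); [assumption|].
rewrite E. nra.
Qed.

Lemma fact_sq_le n : (1 <= n)%nat ->
  INR (fact n) ^ 2 * exp (2 * INR n) <= exp 2 * INR n ^ (2 * n + 1).
Proof.
intros Hn. pose proof (stirling_ratio_le n Hn) as H. unfold stirling_ratio in H.
assert (0 < INR n ^ (2 * n + 1)) by (apply pow_lt, lt_0_INR; lia).
unfold Rdiv in H. apply Rmult_le_compat_r with (r := INR n ^ (2 * n + 1)) in H; [|lra].
rewrite Rmult_assoc, Rinv_l in H by lra. lra.
Qed.

Lemma fact_sq_ge n : (1 <= n)%nat ->
  exp 1 * INR n ^ (2 * n + 1) <= INR (fact n) ^ 2 * exp (2 * INR n).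
Proof.
intros Hn. pose proof (stirling_ratio_ge n Hn) as H. unfold stirling_ratio in H.
assert (0 < INR n ^ (2 * n + 1)) by (apply pow_lt, lt_0_INR; lia).
assert (exp 1 <= exp (1 + 1 / INR n)).
{ apply exp_le. assert (0 < 1 / INR n) by (apply Rdiv_lt_0_compat; [lra | apply lt_0_INR; lia]). lra. }
set (x := exp (1 + 1 / INR n)) in *.
unfold Rdiv in H. apply Rmult_le_compat_r with (r := INR n ^ (2 * n + 1)) in H; [|lra].
rewrite Rmult_assoc, Rinv_l in H by lra. nra.
Qed.

Lemma pow_add_le_exp a b k : 0 < a -> 0 <= b -> (a + b) ^ k <= exp (INR k * b / a) * a ^ k.
Proof.
intros Ha Hb.
replace (a + b) with ((1 + b / a) * a) by (field; lra).
rewrite Rpow_mult_distr. apply Rmult_le_compat_r; [apply pow_le; lra|].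
replace (INR k * b / a) with (INR k * (b / a)) by (field; lra).
rewrite <- exp_pow. apply pow_incr. split.
- assert (0 <= b / a) by (unfold Rdiv; apply Rle_mult_inv_pos; lra). lra.
- apply exp_ineq1_le.
Qed.

Lemma exp2_mul_pow2_le i : (2 <= i)%nat -> exp 2 * 2 ^ i <= (exp 1 * INR i) ^ i.
Proof.
intros Hi. destruct (Nat.le_exists_sub 2 i Hi) as [m [-> _]].
set (I := INR (m + 2)).
assert (HI : 2 <= I) by (unfold I; rewrite plus_INR; simpl; pose proof (pos_INR m); lra).
assert (He : 1 <= exp 1) by (pose proof (exp_ineq1_le 1); lra).
replace (exp 2) with (exp 1 ^ 2) by (rewrite exp_pow; f_equal; simpl; ring).
rewrite !pow_add.
assert (Hm : 2 ^ m <= (exp 1 * I) ^ m) by (apply pow_incr; nra).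
assert (0 < 2 ^ m) by (apply pow_lt; lra).
replace ((exp 1 * I) ^ 2) with (exp 1 ^ 2 * I ^ 2) by ring.
assert (0 < exp 1 ^ 2) by (apply pow_lt; lra).
assert (2 ^ 2 <= I ^ 2) by (simpl; nra).
apply Rle_trans with (exp 1 ^ 2 * ((exp 1 * I) ^ m * 2 ^ 2)).
- apply Rmult_le_compat_l; [lra|]. apply Rmult_le_compat_r; [lra | exact Hm].
- replace ((exp 1 * I) ^ m * (exp 1 ^ 2 * I ^ 2)) with (exp 1 ^ 2 * ((exp 1 * I) ^ m * I ^ 2)) by ring.
  apply Rmult_le_compat_l; [lra|]. apply Rmult_le_compat_l; [apply pow_le; nra | assumption].
Qed.

Lemma Rpower_half_sq x k : 0 < x -> (1 <= k)%nat ->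
  Rpower x ((INR k - 1) / 2) ^ 2 = x ^ (k - 1).
Proof.
intros Hx Hk.
rewrite <- Rpower_pow by (unfold Rpower; apply exp_pos).
rewrite Rpower_mult, <- Rpower_pow by exact Hx. f_equal.
rewrite minus_INR by exact Hk. simpl. field.
Qed.

Lemma le_div_Rpower_half x k y c : 0 < x -> (1 <= k)%nat -> 0 <= y -> 0 <= c ->
  y ^ 2 * x ^ (k - 1) <= c ^ 2 -> y <= c / Rpower x ((INR k - 1) / 2).
Proof.
intros Hx Hk Hy Hc H.
rewrite <- (Rpower_half_sq x k Hx Hk) in H.
set (X := Rpower x ((INR k - 1) / 2)) in *.
assert (HX : 0 < X) by (unfold X, Rpower; apply exp_pos).
apply Rmult_le_reg_r with X; [exact HX|].
unfold Rdiv. rewrite Rmult_assoc, Rinv_l, Rmult_1_r by lra.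
apply Rsqr_incr_0_var; [|exact Hc]. rewrite !Rsqr_pow2, Rpow_mult_distr. exact H.
Qed.

Section BalancedFactorials.
Variables n i q r : nat.
Hypotheses (Hq : (1 <= q)%nat) (Hi : (1 <= i)%nat) (Hr : (r < i)%nat) (Hn : n = (q * i + r)%nat).

(* Bounds (n / i) ^ n, where n / i = q + r / i. *)
Let quot_pow_bound := exp (INR r) * INR q ^ (q * i) * (INR q + 1) ^ r.

Let balanced_fact := INR (fact q) ^ i * (INR q + 1) ^ r.

Lemma pow_le_balanced : INR n ^ n <= INR i ^ n * quot_pow_bound.
Proof.
assert (HQ : 1 <= INR q) by (apply (le_INR 1); exact Hq).
assert (HI : 1 <= INR i) by (apply (le_INR 1); exact Hi).
assert (HR : INR r <= INR i) by (apply le_INR; lia).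
unfold quot_pow_bound. rewrite Hn.
replace (INR i ^ (q * i + r) * (exp (INR r) * INR q ^ (q * i) * (INR q + 1) ^ r))
  with (exp (INR r) * (INR q * INR i) ^ (q * i) * (INR i * (INR q + 1)) ^ r)
  by (rewrite pow_add, !Rpow_mult_distr; ring).
rewrite pow_add, plus_INR, mult_INR.
apply Rmult_le_compat; try (apply pow_le; apply Rplus_le_le_0_compat; try apply Rmult_le_pos; apply pos_INR).
- replace (exp (INR r)) with (exp (INR (q * i) * INR r / (INR q * INR i))).
  + apply pow_add_le_exp; [nra | apply pos_INR].
  + f_equal. rewrite mult_INR. field. lra.
- apply pow_incr. split; [apply Rplus_le_le_0_compat; try apply Rmult_le_pos; apply pos_INR | nra].
Qed.

Lemma fact_sq_exp_le_balanced :
  INR (fact n) ^ 2 * exp (2 * INR n) <= exp 2 * INR n * INR i ^ (2 * n) * quot_pow_bound ^ 2.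
Proof.
assert (HN : 0 <= INR n) by apply pos_INR.
apply Rle_trans with (exp 2 * INR n ^ (2 * n + 1)); [apply fact_sq_le; nia|].
replace (exp 2 * INR n ^ (2 * n + 1)) with (exp 2 * INR n * (INR n ^ n) ^ 2)
  by (rewrite <- pow_mult, Nat.mul_comm, pow_add; ring).
replace (exp 2 * INR n * INR i ^ (2 * n) * quot_pow_bound ^ 2)
  with (exp 2 * INR n * (INR i ^ n * quot_pow_bound) ^ 2)
  by (rewrite Rpow_mult_distr, <- pow_mult, Nat.mul_comm; ring).
apply Rmult_le_compat_l; [apply Rmult_le_pos; [left; apply exp_pos | exact HN]|].
apply pow_incr. split; [apply pow_le, HN | exact pow_le_balanced].
Qed.

Lemma fact_balanced_sq_exp_ge :
  (exp 1 * INR q) ^ i * quot_pow_bound ^ 2 <= balanced_fact ^ 2 * exp (2 * INR n).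
Proof.
assert (HE : exp (2 * INR n) = exp (2 * INR q) ^ i * exp (INR r) ^ 2).
{ rewrite !exp_pow, <- exp_plus, Hn, plus_INR, mult_INR. f_equal. simpl. ring. }
set (C := ((INR q + 1) ^ r) ^ 2 * exp (INR r) ^ 2).
assert (HC : 0 <= C) by (unfold C; apply Rmult_le_pos; apply pow2_ge_0).
apply Rle_trans with (C * (exp 1 * INR q ^ (2 * q + 1)) ^ i).
- right. unfold C, quot_pow_bound.
  rewrite !Rpow_mult_distr, <- !pow_mult. replace ((2 * q + 1) * i)%nat with (q * i * 2 + i)%nat by lia.
  rewrite pow_add. ring.
- apply Rle_trans with (C * (INR (fact q) ^ 2 * exp (2 * INR q)) ^ i).
  + apply Rmult_le_compat_l; [exact HC|]. apply pow_incr. split; [|exact (fact_sq_ge q Hq)].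
    apply Rmult_le_pos; [left; apply exp_pos | apply pow_le, pos_INR].
  + right. unfold C, balanced_fact. rewrite HE, !Rpow_mult_distr, <- !pow_mult, (Nat.mul_comm i 2). ring.
Qed.

Lemma sq_le_of_mul_balanced_fact_le D : 0 <= D -> D * balanced_fact <= INR (fact n) ->
  D ^ 2 * (exp 1 * INR q) ^ i <= exp 2 * INR n * INR i ^ (2 * n).
Proof.
intros HD HDB.
assert (HM : 0 < quot_pow_bound ^ 2).
{ apply pow_lt. unfold quot_pow_bound. repeat apply Rmult_lt_0_compat; try apply exp_pos;
  apply pow_lt; [apply lt_0_INR; lia | pose proof (pos_INR q); lra]. }
apply Rmult_le_reg_r with (quot_pow_bound ^ 2); [exact HM|].
apply Rle_trans with (D ^ 2 * (balanced_fact ^ 2 * exp (2 * INR n))).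
- rewrite Rmult_assoc. apply Rmult_le_compat_l; [apply pow_le, HD | exact fact_balanced_sq_exp_ge].
- eapply Rle_trans; [|exact fact_sq_exp_le_balanced].
  rewrite <- Rmult_assoc, <- Rpow_mult_distr. apply Rmult_le_compat_r; [left; apply exp_pos|].
  apply pow_incr. split; [|exact HDB].
  apply Rmult_le_pos; [exact HD | unfold balanced_fact; apply Rmult_le_pos; apply pow_le; [apply pos_INR | pose proof (pos_INR q); lra]].
Qed.

Lemma sq_pow_le_of_fact_bound Fr D : (2 <= i)%nat -> 0 <= Fr -> 0 <= D ->
  Fr <= D * INR i ^ n -> D * balanced_fact <= INR (fact n) ->
  Fr ^ 2 * INR n ^ (i - 1) <= (INR i ^ (2 * n + i)) ^ 2.
Proof.
intros Hi2 HF HD HFD HDB.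
pose proof (sq_le_of_mul_balanced_fact_le D HD HDB) as HD2.
pose proof (exp2_mul_pow2_le i Hi2) as Hexp.
set (N := INR n) in *. set (I := INR i) in *. set (Q := INR q) in *.
assert (HQ : 1 <= Q) by (apply (le_INR 1); exact Hq).
assert (HI : 0 <= I) by apply pos_INR.
assert (HN : 0 <= N) by apply pos_INR.
assert (HeQ : 0 < (exp 1 * Q) ^ i) by (apply pow_lt, Rmult_lt_0_compat; [apply exp_pos | lra]).
assert (HNi : N ^ i <= 2 ^ i * I ^ i * Q ^ i).
{ rewrite <- !Rpow_mult_distr. apply pow_incr. split; [exact HN|].
  unfold N, I, Q. rewrite Hn, plus_INR, mult_INR.
  assert (INR r <= INR i * INR q) by (rewrite <- mult_INR; apply le_INR; nia). lra. }
assert (HF2 : Fr ^ 2 <= D ^ 2 * I ^ (2 * n)).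
{ replace (D ^ 2 * I ^ (2 * n)) with ((D * I ^ n) ^ 2)
    by (rewrite Rpow_mult_distr, <- pow_mult, (Nat.mul_comm n 2); reflexivity).
  apply pow_incr. split; [exact HF | exact HFD]. }
assert (ENi : N ^ i = N * N ^ (i - 1)) by (replace i with (S (i - 1)) at 1 by lia; reflexivity).
apply Rmult_le_reg_r with ((exp 1 * Q) ^ i); [exact HeQ|].
apply Rle_trans with (D ^ 2 * (exp 1 * Q) ^ i * (I ^ (2 * n) * N ^ (i - 1))).
{ replace (D ^ 2 * (exp 1 * Q) ^ i * (I ^ (2 * n) * N ^ (i - 1)))
    with (D ^ 2 * I ^ (2 * n) * N ^ (i - 1) * (exp 1 * Q) ^ i) by ring.
  apply Rmult_le_compat_r; [lra|]. apply Rmult_le_compat_r; [apply pow_le, HN | exact HF2]. }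
apply Rle_trans with (exp 2 * N ^ i * (I ^ (2 * n) * I ^ (2 * n))).
{ rewrite ENi. replace (exp 2 * (N * N ^ (i - 1)) * (I ^ (2 * n) * I ^ (2 * n)))
    with (exp 2 * N * I ^ (2 * n) * (I ^ (2 * n) * N ^ (i - 1))) by ring.
  apply Rmult_le_compat_r; [apply Rmult_le_pos; apply pow_le; assumption | exact HD2]. }
assert (HI2 : 0 <= I ^ (2 * n) * I ^ (2 * n)) by (apply Rmult_le_pos; apply pow_le; exact HI).
apply Rle_trans with ((exp 1 * I) ^ i * (I ^ i * Q ^ i) * (I ^ (2 * n) * I ^ (2 * n))).
{ apply Rmult_le_compat_r; [exact HI2|].
  apply Rle_trans with (exp 2 * 2 ^ i * (I ^ i * Q ^ i)).
  - replace (exp 2 * 2 ^ i * (I ^ i * Q ^ i)) with (exp 2 * (2 ^ i * I ^ i * Q ^ i)) by ring.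
    apply Rmult_le_compat_l; [left; apply exp_pos | exact HNi].
  - apply Rmult_le_compat_r; [apply Rmult_le_pos; apply pow_le; lra | exact Hexp]. }
right. rewrite pow_add, !Rpow_mult_distr. ring.
Qed.

Lemma le_bound_of_fact_bound Fr D : 0 <= Fr -> 0 <= D ->
  Fr <= D * INR i ^ n -> D * balanced_fact <= INR (fact n) ->
  Fr <= INR i ^ (2 * n + i) / Rpower (INR n) ((INR i - 1) / 2).
Proof.
intros HF HD HFD HDB.
apply le_div_Rpower_half; [apply lt_0_INR; nia | exact Hi | exact HF | apply pow_le, pos_INR|].
destruct (Nat.eq_dec i 1) as [Hi1|Hi1]; [|apply sq_pow_le_of_fact_bound with D; lia || assumption].
assert (r = 0)%nat as -> by lia.
assert (HA : 0 < INR (fact n)) by apply lt_0_INR, lt_O_fact.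
unfold balanced_fact in HDB. subst i n. rewrite Nat.mul_1_r, Nat.add_0_r in *.
simpl INR in *. rewrite pow_O, !pow1, !Rmult_1_r in *.
assert (D <= 1) by nra. nra.
Qed.

End BalancedFactorials.

Theorem lemmal : forall n i : nat,
  (0 < n)%nat -> (0 < i)%nat -> ((2 * i) ^ 100 <= n)%nat ->
  INR (F n i) <= (INR i) ^ (2 * n + i) / Rpower (INR n) ((INR i - 1) / 2).
Proof.
intros n i Hn Hi Hb.
destruct i as [|i]; [lia|].
destruct (Multinomial.F_le_balanced_decomp n i) as (D & q & r & [HF HD Hnqr Hr]).
assert (Hq : (1 <= q)%nat).
{ pose proof (Nat.pow_le_mono_r (2 * S i) 1 100 ltac:(lia) ltac:(lia)) as Hpow.
  rewrite Nat.pow_1_r in Hpow. destruct q; lia. }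
apply (le_bound_of_fact_bound n (S i) q r Hq ltac:(lia) Hr Hnqr _ (INR D)); try apply pos_INR.
- rewrite <- pow_INR, <- mult_INR. apply le_INR. exact HF.
- rewrite <- S_INR, <- !pow_INR, <- !mult_INR. apply le_INR. exact HD.
Qed.
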